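(* Let $k\in\mathbb{N}$ be even and let $n,m$ be odd integers. Then $$2K_{k,1}\left(\tfrac{n}{2},\tfrac{m}{2}\right)=K_{k,2}(n,m)=H_{2k}(n,m)\qquad\text{and}\qquad K_{k,1}(n,m)=H_k(n,m).$$
   Context: For even $k\in\mathbb{N}$ put $k^*=4k$ if $\gcd(k,6)=2$ and $k^*=36k$ if $6\mid k$. For $a\in\{1,2\}$ and $n,m\in\frac12\mathbb{Z}$, $K_{k,a}(n,m)=\sum_{0\le h<ak,\ \gcd(h,ak)=1} e^{\frac{2\pi i}{ak}(-nh+mh')}$, where for each $h$, $h'$ is an integer with $hh'\equiv-1\pmod{k^*}$. For $K\in\mathbb{N}$ and integers $n,m$, the Kloosterman sum is $H_K(n,m)=\sum_{0\le h<K,\ \gcd(h,K)=1} e^{-\frac{2\pi i}{K}(nh-mw)}$, where for each $h$, $w$ is an integer with $hw\equiv-1\pmod K$. *)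

From Stdlib Require Import Reals ZArith List.
From Coquelicot Require Import Coquelicot.
Open Scope R_scope.

Definition ee (x : R) : C := (cos (2 * PI * x), sin (2 * PI * x)).

(* finite sum  sum_{0 <= h < N} f h  (empty if N <= 0) *)
Definition csum (N : Z) (f : Z -> C) : C :=
  fold_right Cplus (RtoC 0) (map (fun i => f (Z.of_nat i)) (seq 0 (Z.to_nat N))).

Definition kstar (k : nat) : Z :=
  let kz := Z.of_nat k in
  if Z.eqb (Z.gcd kz 6) 2 then (4 * kz)%Z else (36 * kz)%Z.

(* K_{k,a}(n,m), n m in (1/2)Z represented as reals; inv h plays the role of h'. *)
Definition Kka (k a : nat) (n m : R) (inv : Z -> Z) : C :=
  let N := (Z.of_nat a * Z.of_nat k)%Z in
  csum N (fun h =>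
    if Z.eqb (Z.gcd h N) 1
    then ee ((- n * IZR h + m * IZR (inv h)) / IZR N)
    else RtoC 0).

Definition inv_ok (k a : nat) (inv : Z -> Z) : Prop :=
  forall h : Z, (0 <= h < Z.of_nat a * Z.of_nat k)%Z ->
    Z.gcd h (Z.of_nat a * Z.of_nat k) = 1%Z ->
    Z.divide (kstar k) (h * inv h + 1)%Z.

Definition HK (K : nat) (n m : Z) (w : Z -> Z) : C :=
  let N := Z.of_nat K in
  csum N (fun h =>
    if Z.eqb (Z.gcd h N) 1
    then ee (- (IZR n * IZR h - IZR m * IZR (w h)) / IZR N)
    else RtoC 0).

Definition w_ok (K : nat) (w : Z -> Z) : Prop :=
  forall h : Z, (0 <= h < Z.of_nat K)%Z ->
    Z.gcd h (Z.of_nat K) = 1%Z ->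
    Z.divide (Z.of_nat K) (h * w h + 1)%Z.

(** For even [k], [-h] has the same inverse modulo [2k] whether it is computed
    modulo [k^*] or modulo [2k], since [4k] divides [k^*]; this identifies the
    sums with Kloosterman sums.  For the first identity, split [0 <= h < 2k]
    into [h] and [h + k]: the lower half reproduces [K_{k,1}(n/2, m/2)]
    because [(-nh/2 + mh'/2)/k = (-nh + mh')/(2k)], and so does the upper half,
    because [h' + k] is an inverse of [-(h + k)] modulo [2k] and
    [k(m - n) ≡ 0 (mod 2k)] as [m - n] is even. *)
From Stdlib Require Import Reals ZArith List Lia Znumtheory.
From Coquelicot Require Import Coquelicot.
Open Scope R_scope.

Lemma ee_add_INR (x : R) (q : nat) : ee (x + INR q) = ee x.
Proof.
  unfold ee.
  replace (2 * PI * (x + INR q)) with (2 * PI * x + 2 * INR q * PI) by ring.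
  now rewrite cos_period, sin_period.
Qed.

Lemma ee_add_IZR (x : R) (q : Z) : ee (x + IZR q) = ee x.
Proof.
  destruct (Z_le_gt_dec 0 q) as [Hq|Hq].
  - rewrite <- (Z2Nat.id q Hq), <- INR_IZR_INZ. apply ee_add_INR.
  - rewrite <- (ee_add_INR (x + IZR q) (Z.to_nat (- q))).
    rewrite INR_IZR_INZ, Z2Nat.id, opp_IZR by lia.
    f_equal. ring.
Qed.

Lemma ee_IZR_div_congr (a b N : Z) :
  N <> 0%Z -> (N | a - b)%Z -> ee (IZR a / IZR N) = ee (IZR b / IZR N).
Proof.
  intros HN [q Hq].
  replace (IZR a / IZR N) with (IZR b / IZR N + IZR q).
  - apply ee_add_IZR.
  - replace a with (b + q * N)%Z by lia.
    rewrite plus_IZR, mult_IZR. field. now apply eq_IZR_contrapositive.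
Qed.

Lemma seq_add_shift (s l : nat) : seq s l = map (Nat.add s) (seq 0 l).
Proof.
  induction s as [|s IH].
  - symmetry. apply map_id.
  - now rewrite <- seq_shift, IH, map_map.
Qed.

Lemma fold_right_Cplus_app (l1 l2 : list C) :
  fold_right Cplus 0 (l1 ++ l2) = Cplus (fold_right Cplus 0 l1) (fold_right Cplus 0 l2).
Proof.
  induction l1 as [|x l1 IH]; simpl.
  - now rewrite Cplus_0_l.
  - now rewrite IH, Cplus_assoc.
Qed.

Lemma csum_ext (N : Z) (f g : Z -> C) :
  (forall h, (0 <= h < N)%Z -> f h = g h) -> csum N f = csum N g.
Proof.
  intros Hfg. unfold csum. f_equal. apply map_ext_in.
  intros i Hi. apply in_seq in Hi. apply Hfg. lia.
Qed.

Lemma csum_double (N : Z) (f : Z -> C) : (0 <= N)%Z ->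
  csum (2 * N) f = Cplus (csum N f) (csum N (fun h => f (h + N)%Z)).
Proof.
  intros HN. unfold csum.
  replace (Z.to_nat (2 * N)) with (Z.to_nat N + Z.to_nat N)%nat by lia.
  rewrite seq_app, map_app, fold_right_Cplus_app, (seq_add_shift (0 + _)), map_map.
  do 2 f_equal. apply map_ext. intros i. f_equal. lia.
Qed.

Lemma divide_neg_inv_unique (N h i j : Z) :
  (N | h * i + 1)%Z -> (N | h * j + 1)%Z -> (N | i - j)%Z.
Proof.
  intros Hi Hj.
  replace (i - j)%Z with (i * (h * j + 1) - j * (h * i + 1))%Z by ring.
  apply Z.divide_sub_r; now apply Z.divide_mul_r.
Qed.

Lemma even_add_of_neg_inv (h i : Z) : (2 | h * i + 1)%Z -> (2 | h + i)%Z.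
Proof.
  intros [c Hc].
  destruct (Z.Even_or_Odd h) as [[u ->]|[u ->]],
           (Z.Even_or_Odd i) as [[v ->]|[v ->]]; try lia.
  exists (u + v + 1)%Z. ring.
Qed.

Lemma divide_neg_inv_shift (K h i : Z) : (2 | K)%Z ->
  (4 * K | h * i + 1)%Z -> (2 * K | (h + K) * (i + K) + 1)%Z.
Proof.
  intros HK Hhi.
  assert (H2K : (2 * K | h * i + 1)%Z).
  { apply (Z.divide_trans _ (4 * K)); [exists 2%Z; ring | exact Hhi]. }
  assert (Hsum : (2 | h + i + K)%Z).
  { apply Z.divide_add_r; [|exact HK]. apply even_add_of_neg_inv.
    apply (Z.divide_trans _ (2 * K)); [apply Z.divide_factor_l | exact H2K]. }
  replace ((h + K) * (i + K) + 1)%Z with (h * i + 1 + (h + i + K) * K)%Z by ring.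
  apply Z.divide_add_r; [exact H2K|].
  now apply Z.mul_divide_mono_r.
Qed.

Lemma coprime_double (h K : Z) : (2 | K)%Z ->
  Z.gcd h (2 * K) = 1%Z <-> Z.gcd h K = 1%Z.
Proof.
  intros HK. rewrite !Zgcd_1_rel_prime. split; intros Hh.
  - apply rel_prime_sym, (rel_prime_div (2 * K)); [apply rel_prime_sym, Hh|].
    apply Z.divide_factor_r.
  - apply rel_prime_mult; [|exact Hh].
    apply rel_prime_sym, (rel_prime_div K); [apply rel_prime_sym, Hh | exact HK].
Qed.

Lemma gcd_add_diag_l (h K : Z) : Z.gcd (h + K) K = Z.gcd h K.
Proof. now rewrite Z.gcd_comm, Z.gcd_add_diag_r, Z.gcd_comm. Qed.

Lemma kstar_divide (k : nat) : (4 * Z.of_nat k | kstar k)%Z.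
Proof.
  unfold kstar. destruct (Z.gcd (Z.of_nat k) 6 =? 2)%Z.
  - apply Z.divide_refl.
  - exists 9%Z. ring.
Qed.

Definition Kterm (N : Z) (n m : R) (inv : Z -> Z) (h : Z) : C :=
  if Z.eqb (Z.gcd h N) 1
  then ee ((- n * IZR h + m * IZR (inv h)) / IZR N)
  else RtoC 0.

Lemma Kka_csum (k a : nat) (n m : R) (inv : Z -> Z) :
  Kka k a n m inv =
  csum (Z.of_nat a * Z.of_nat k) (Kterm (Z.of_nat a * Z.of_nat k) n m inv).
Proof. reflexivity. Qed.

Lemma Kka_HK (k a K : nat) (n m : Z) (inv w : Z -> Z) :
  (Z.of_nat a * Z.of_nat k = Z.of_nat K)%Z -> (Z.of_nat K | kstar k)%Z ->
  inv_ok k a inv -> w_ok K w ->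
  Kka k a (IZR n) (IZR m) inv = HK K n m w.
Proof.
  intros HaK HK Hinv Hw. rewrite Kka_csum, HaK. apply csum_ext.
  intros h Hh. unfold Kterm.
  destruct (Z.eqb_spec (Z.gcd h (Z.of_nat K)) 1) as [Hg|]; [|reflexivity].
  rewrite <- opp_IZR, <- !mult_IZR, <- plus_IZR, <- minus_IZR, <- opp_IZR.
  apply ee_IZR_div_congr; [lia|].
  replace (- n * h + m * inv h - - (n * h - m * w h))%Z
    with (m * (inv h - w h))%Z by ring.
  apply Z.divide_mul_r, (divide_neg_inv_unique _ h).
  - apply (Z.divide_trans _ (kstar k)); [exact HK|].
    apply Hinv; rewrite HaK; assumption.
  - now apply Hw.
Qed.

Lemma half_phase (x y z w c : R) : c <> 0 ->
  (- (x / 2) * y + z / 2 * w) / c = (- x * y + z * w) / (2 * c).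
Proof. intros Hc. field. exact Hc. Qed.

Section HalfIntegral.

Variables (k : nat) (n m : Z) (inv1 inv2 : Z -> Z).
Hypotheses (Hk : Nat.even k = true) (Hn : Z.odd n = true) (Hm : Z.odd m = true)
  (Hinv1 : inv_ok k 1 inv1) (Hinv2 : inv_ok k 2 inv2).

Local Notation K := (Z.of_nat k).

Lemma two_divide_K : (2 | K)%Z.
Proof. apply Nat.even_spec in Hk as [j ->]. exists (Z.of_nat j). lia. Qed.

Lemma inv1_spec (h : Z) : (0 <= h < K)%Z -> Z.gcd h K = 1%Z ->
  (4 * K | h * inv1 h + 1)%Z.
Proof.
  intros Hh Hg. apply (Z.divide_trans _ (kstar k)); [apply kstar_divide|].
  apply Hinv1; rewrite Z.mul_1_l; assumption.
Qed.

Lemma inv2_spec (h : Z) : (0 <= h < 2 * K)%Z -> Z.gcd h (2 * K) = 1%Z ->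
  (4 * K | h * inv2 h + 1)%Z.
Proof.
  intros Hh Hg. apply (Z.divide_trans _ (kstar k)); [apply kstar_divide|].
  now apply Hinv2.
Qed.

Lemma Kterm_half_low (h : Z) : (0 <= h < K)%Z ->
  Kterm K (IZR n / 2) (IZR m / 2) inv1 h = Kterm (2 * K) (IZR n) (IZR m) inv2 h.
Proof.
  intros Hh. unfold Kterm.
  replace (Z.gcd h (2 * K) =? 1)%Z with (Z.gcd h K =? 1)%Z.
  2: { apply Bool.eq_iff_eq_true. rewrite !Z.eqb_eq.
       symmetry. apply coprime_double, two_divide_K. }
  destruct (Z.eqb_spec (Z.gcd h K) 1) as [Hg|]; [|reflexivity].
  rewrite half_phase by (apply eq_IZR_contrapositive; lia).
  rewrite <- mult_IZR, <- opp_IZR, <- !mult_IZR, <- !plus_IZR.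
  apply ee_IZR_div_congr; [lia|].
  replace (- n * h + m * inv1 h - (- n * h + m * inv2 h))%Z
    with (m * (inv1 h - inv2 h))%Z by ring.
  apply Z.divide_mul_r, (divide_neg_inv_unique _ h);
    (apply (Z.divide_trans _ (4 * K)); [exists 2%Z; ring|]).
  - now apply inv1_spec.
  - apply inv2_spec; [lia | now rewrite coprime_double by exact two_divide_K].
Qed.

Lemma Kterm_half_high (h : Z) : (0 <= h < K)%Z ->
  Kterm K (IZR n / 2) (IZR m / 2) inv1 h
  = Kterm (2 * K) (IZR n) (IZR m) inv2 (h + K).
Proof.
  intros Hh. pose proof two_divide_K as HK. unfold Kterm.
  replace (Z.gcd (h + K) (2 * K) =? 1)%Z with (Z.gcd h K =? 1)%Z.
  2: { apply Bool.eq_iff_eq_true. rewrite !Z.eqb_eq, coprime_double by exact HK.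
       now rewrite gcd_add_diag_l. }
  destruct (Z.eqb_spec (Z.gcd h K) 1) as [Hg|]; [|reflexivity].
  rewrite half_phase by (apply eq_IZR_contrapositive; lia).
  rewrite <- mult_IZR, <- !opp_IZR, <- !mult_IZR, <- !plus_IZR.
  apply ee_IZR_div_congr; [lia|].
  replace (- n * h + m * inv1 h - (- n * (h + K) + m * inv2 (h + K)))%Z
    with (m * ((inv1 h + K) - inv2 (h + K)) + (n - m) * K)%Z by ring.
  apply Z.divide_add_r.
  - apply Z.divide_mul_r, (divide_neg_inv_unique _ (h + K)).
    + apply divide_neg_inv_shift; [exact HK | now apply inv1_spec].
    + apply (Z.divide_trans _ (4 * K)); [exists 2%Z; ring|].
      apply inv2_spec; [lia|]. now rewrite coprime_double, gcd_add_diag_l.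
  - apply Z.mul_divide_mono_r.
    apply Z.odd_spec in Hn as [u ->]. apply Z.odd_spec in Hm as [v ->].
    exists (u - v)%Z. ring.
Qed.

Lemma Kka_half_double :
  Cmult (RtoC 2) (Kka k 1 (IZR n / 2) (IZR m / 2) inv1) = Kka k 2 (IZR n) (IZR m) inv2.
Proof.
  rewrite !Kka_csum, Z.mul_1_l. change (Z.of_nat 2) with 2%Z.
  rewrite csum_double by lia.
  rewrite <- (csum_ext _ _ _ Kterm_half_low), <- (csum_ext _ _ _ Kterm_half_high).
  ring.
Qed.

End HalfIntegral.

Theorem theorem2p5 (k : nat) (n m : Z)
  (inv1 inv2 inv3 w1 w2 : Z -> Z) :
  Nat.even k = true -> Z.odd n = true -> Z.odd m = true ->
  inv_ok k 1 inv1 -> inv_ok k 2 inv2 -> inv_ok k 1 inv3 ->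
  w_ok (2 * k) w1 -> w_ok k w2 ->
  Cmult (RtoC 2) (Kka k 1 (IZR n / 2) (IZR m / 2) inv1) = Kka k 2 (IZR n) (IZR m) inv2 /\
  Kka k 2 (IZR n) (IZR m) inv2 = HK (2 * k) n m w1 /\
  Kka k 1 (IZR n) (IZR m) inv3 = HK k n m w2.
Proof.
  intros Hk Hn Hm Hinv1 Hinv2 Hinv3 Hw1 Hw2.
  split; [|split].
  - now apply Kka_half_double.
  - apply Kka_HK; [lia| |assumption..].
    apply (Z.divide_trans _ (4 * Z.of_nat k)); [exists 2%Z; lia | apply kstar_divide].
  - apply Kka_HK; [lia| |assumption..].
    apply (Z.divide_trans _ (4 * Z.of_nat k)); [exists 4%Z; lia | apply kstar_divide].
Qed.
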